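(* Let $V=\bigoplus_{i\in\mathbb N}\mathbb R$ (finitely supported sequences, coordinatewise addition) and $F=\mathbb R$, where $\alpha\in\mathbb R$ acts by $\alpha\cdot(v_i)_i=(\alpha^{2i+1}v_i)_i$. Then $(V,F)$ is a near vector space, but for any non-principal ultrafilter $\mathcal U$ on $\mathbb N$ the ultrapower $\mathcal W=V^{\mathbb N}/\mathcal U$ (as an $\mathcal L_{Fnvs}$-structure) is not a near vector space over $F$: its quasi-kernel does not generate it. Moreover $Q(\mathcal W)\subsetneq \prod Q(V)/\mathcal U$. Consequently the class of near vector spaces over $F$ is not elementary (not axiomatisable by first-order sentences in $\mathcal L_{Fnvs}$).
   Context: An F-group is a pair $(V,F)$ where $(V,+)$ is a group and $F$ is a set of endomorphisms of $V$ such that: the maps $0,1,-1$ lie in $F$; $F\setminus\{0\}$ is a subgroup of $\mathrm{Aut}(V,+)$ under composition; and if $\alpha x=\beta x$ with $\alpha,\beta\in F$, $x\in V$ then $\alpha=\beta$ or $x=0$. The quasi-kernel $Q(V)$ is the set of $u\in V$ such that for all $\alpha,\beta\in F$ there is $\gamma\in F$ with $\alpha u+\beta u=\gamma u$. $(V,F)$ is a near vector space if $Q(V)$ generates $(V,+)$. The language $\mathcal L_{Fnvs}=\{+,0,(\lambda)_{\lambda\in F}\}$ has a unary function symbol for each $\lambda\in F$, interpreted as the action of $\lambda$; ultrapowers are taken in this language, so $F$ acts on $\mathcal W$ coordinatewise. *)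

From Stdlib Require Import Reals Lia Classical ClassicalEpsilon FunctionalExtensionality.
Open Scope R_scope.

Record LStruct := {
  car :> Type;
  ladd : car -> car -> car;
  lzero : car;
  lact : R -> car -> car
}.

Arguments ladd {_}.
Arguments lzero {_}.
Arguments lact {_}.

Definition is_group (M : LStruct) : Prop :=
  (forall x y z : M, ladd x (ladd y z) = ladd (ladd x y) z) /\
  (forall x : M, ladd lzero x = x /\ ladd x lzero = x) /\
  (forall x : M, exists y : M, ladd x y = lzero /\ ladd y x = lzero).

(* F = { lact l | l in R }, a set of maps V -> V.
   A map f lies in F iff f = lact l (pointwise) for some l. *)
Definition F_group (M : LStruct) : Prop :=
  is_group M /\
  (forall (l : R) (x y : M), lact l (ladd x y) = ladd (lact l x) (lact l y)) /\
  (exists l, forall x : M, lact l x = lzero) /\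
  (exists l, forall x : M, lact l x = x) /\
  (exists l, forall x : M, ladd x (lact l x) = lzero /\ ladd (lact l x) x = lzero) /\
  (* F \ {0} is a subgroup of Aut(V,+) under composition *)
  (forall l : R, (exists x : M, lact l x <> lzero) ->
     (forall x y : M, lact l x = lact l y -> x = y) /\
     (forall y : M, exists x, lact l x = y)) /\
  (forall l1 l2 : R, (exists x : M, lact l1 x <> lzero) -> (exists x : M, lact l2 x <> lzero) ->
     exists l3, forall x : M, lact l3 x = lact l1 (lact l2 x)) /\
  (forall l : R, (exists x : M, lact l x <> lzero) ->
     exists l', forall x : M, lact l' (lact l x) = x) /\
  (forall (a b : R) (x : M), lact a x = lact b x ->
     (forall y : M, lact a y = lact b y) \/ x = lzero).

Definition Qker (M : LStruct) (u : M) : Prop :=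
  forall a b : R, exists c : R, ladd (lact a u) (lact b u) = lact c u.

Inductive gen (M : LStruct) (S : M -> Prop) : M -> Prop :=
  | gen_in : forall u, S u -> gen M S u
  | gen_zero : gen M S lzero
  | gen_add : forall x y, gen M S x -> gen M S y -> gen M S (ladd x y)
  | gen_inv : forall x y, gen M S x -> ladd y x = lzero -> gen M S y.

Definition near_vs (M : LStruct) : Prop :=
  F_group M /\ forall v : M, gen M (Qker M) v.

Definition fin_supp (s : nat -> R) : Prop := exists N, forall i, (N <= i)%nat -> s i = 0.

Definition Vcar := { s : nat -> R | fin_supp s }.

Lemma fin_supp_add (s t : nat -> R) : fin_supp s -> fin_supp t -> fin_supp (fun i => s i + t i).
Proof.
  intros [N1 H1] [N2 H2]; exists (N1 + N2)%nat; intros i Hi.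
  rewrite H1, H2 by lia; ring.
Qed.

Lemma fin_supp_zero : fin_supp (fun _ => 0).
Proof. exists 0%nat; auto. Qed.

Lemma fin_supp_act (a : R) (s : nat -> R) : fin_supp s -> fin_supp (fun i => a ^ (2 * i + 1) * s i).
Proof. intros [N H]; exists N; intros i Hi; rewrite H by lia; ring. Qed.

Definition Vadd (x y : Vcar) : Vcar :=
  exist _ (fun i => proj1_sig x i + proj1_sig y i) (fin_supp_add _ _ (proj2_sig x) (proj2_sig y)).
Definition Vzero : Vcar := exist _ (fun _ => 0) fin_supp_zero.
Definition Vact (a : R) (x : Vcar) : Vcar :=
  exist _ (fun i => a ^ (2 * i + 1) * proj1_sig x i) (fin_supp_act a _ (proj2_sig x)).

Definition Vstr : LStruct := {| car := Vcar; ladd := Vadd; lzero := Vzero; lact := Vact |}.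

Definition ultrafilter (U : (nat -> Prop) -> Prop) : Prop :=
  U (fun _ => True) /\
  ~ U (fun _ => False) /\
  (forall A B : nat -> Prop, U A -> (forall n, A n -> B n) -> U B) /\
  (forall A B : nat -> Prop, U A -> U B -> U (fun n => A n /\ B n)) /\
  (forall A : nat -> Prop, U A \/ U (fun n => ~ A n)).

Definition nonprincipal (U : (nat -> Prop) -> Prop) : Prop :=
  forall n : nat, ~ U (fun m => m = n).

Section Ultrapower.
Variables (M : LStruct) (U : (nat -> Prop) -> Prop).

Definition ueq (f g : nat -> M) : Prop := U (fun n => f n = g n).

Record UPcar := { ucls : (nat -> M) -> Prop; uclsP : exists f, ucls = ueq f }.

Definition uclass (f : nat -> M) : UPcar := {| ucls := ueq f; uclsP := ex_intro _ f eq_refl |}.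

Definition urep (w : UPcar) : nat -> M := proj1_sig (constructive_indefinite_description _ (uclsP w)).

Definition UPadd (w1 w2 : UPcar) : UPcar := uclass (fun n => ladd (urep w1 n) (urep w2 n)).
Definition UPzero : UPcar := uclass (fun _ => lzero).
Definition UPact (a : R) (w : UPcar) : UPcar := uclass (fun n => lact a (urep w n)).

Definition ultrapower : LStruct :=
  {| car := UPcar; ladd := UPadd; lzero := UPzero; lact := UPact |}.

Definition prodQ (w : UPcar) : Prop :=
  exists f : nat -> M, w = uclass f /\ U (fun n => Qker M (f n)).

End Ultrapower.

Inductive term : Type :=
  | tvar : nat -> term
  | tzero : term
  | tadd : term -> term -> term
  | tact : R -> term -> term.

Inductive formula : Type :=
  | feq : term -> term -> formula
  | fnot : formula -> formula
  | fand : formula -> formula -> formula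
  | fall : nat -> formula -> formula.

Fixpoint teval (M : LStruct) (e : nat -> M) (t : term) : M :=
  match t with
  | tvar n => e n
  | tzero => lzero
  | tadd t1 t2 => ladd (teval M e t1) (teval M e t2)
  | tact a t1 => lact a (teval M e t1)
  end.

Fixpoint holds (M : LStruct) (e : nat -> M) (phi : formula) : Prop :=
  match phi with
  | feq t1 t2 => teval M e t1 = teval M e t2
  | fnot p => ~ holds M e p
  | fand p q => holds M e p /\ holds M e q
  | fall n p => forall x : M, holds M (fun k => if Nat.eqb k n then x else e k) p
  end.

Fixpoint tfree (t : term) (n : nat) : Prop :=
  match t with
  | tvar m => m = n
  | tzero => False
  | tadd t1 t2 => tfree t1 n \/ tfree t2 n
  | tact _ t1 => tfree t1 n
  end.

Fixpoint ffree (phi : formula) (n : nat) : Prop :=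
  match phi with
  | feq t1 t2 => tfree t1 n \/ tfree t2 n
  | fnot p => ffree p n
  | fand p q => ffree p n \/ ffree q n
  | fall m p => m <> n /\ ffree p n
  end.

Definition sentence (phi : formula) : Prop := forall n, ~ ffree phi n.

Definition models (M : LStruct) (phi : formula) : Prop := forall e : nat -> M, holds M e phi.

Definition elementary (K : LStruct -> Prop) : Prop :=
  exists T : formula -> Prop, (forall phi, T phi -> sentence phi) /\
    forall M : LStruct, K M <-> (forall phi, T phi -> models M phi).

(* In V every vector is a finite sum of vectors supported on one coordinate, and these lie in
   Q(V) because odd powers are onto R: a^(2k+1) + b^(2k+1) is again a (2k+1)-st power.
   Conversely, if u lies in a quasi-kernel then 1u + 1u = cu for some c, and c^(2i+1) = 2 holds
   for at most one i, so u is supported on a single coordinate determined by c.  In the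
   ultrapower W the same c works for U-almost every component, so every element of Q(W) is
   a.e. supported on one fixed coordinate, and everything generated by Q(W) has a.e. bounded
   support.  The class of the sequence of unit vectors (e_n)_n has unbounded support, so it is
   not generated by Q(W), although each e_n lies in Q(V).  Since W satisfies every sentence
   true in V (Los), no first-order theory axiomatises near vector spaces. *)

From Pilot Require Import Defs.
From Stdlib Require Import Reals Lra Lia Bool Classical ClassicalEpsilon FunctionalExtensionality
  PropExtensionality ProofIrrelevance.
From mathcomp Require ssrnat filter.
Open Scope R_scope.

Lemma pow_odd_opp (x : R) (i : nat) : (- x) ^ (2 * i + 1) = - x ^ (2 * i + 1).
Proof.
  replace (- x) with (-1 * x) by ring.
  rewrite Rpow_mult_distr, pow_add, pow_mult.
  replace ((-1) ^ 2) with 1 by ring.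
  rewrite pow1; ring.
Qed.

Lemma pow_nonneg_lt (a b : R) (n : nat) : 0 <= a < b -> a ^ S n < b ^ S n.
Proof.
  intros [Ha Hab]. simpl.
  assert (a ^ n <= b ^ n) by (apply pow_incr; lra).
  assert (0 < b ^ n) by (apply pow_lt; lra).
  apply Rle_lt_trans with (a * b ^ n).
  - apply Rmult_le_compat_l; lra.
  - apply Rmult_lt_compat_r; lra.
Qed.

Lemma pow_odd_lt (a b : R) (i : nat) : a < b -> a ^ (2 * i + 1) < b ^ (2 * i + 1).
Proof.
  intro Hab. replace (2 * i + 1)%nat with (S (2 * i)) by lia.
  destruct (Rle_lt_dec 0 a); [apply pow_nonneg_lt; lra|].
  replace (S (2 * i)) with (2 * i + 1)%nat by lia.
  assert (Hneg : 0 < (- a) ^ (2 * i + 1)) by (apply pow_lt; lra).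
  rewrite pow_odd_opp in Hneg.
  destruct (Rle_lt_dec b 0).
  - assert (Hopp : (- b) ^ (2 * i + 1) < (- a) ^ (2 * i + 1)).
    { replace (2 * i + 1)%nat with (S (2 * i)) by lia. apply pow_nonneg_lt; lra. }
    rewrite !pow_odd_opp in Hopp; lra.
  - assert (0 < b ^ (2 * i + 1)) by (apply pow_lt; lra). lra.
Qed.

Lemma pow_odd_inj (a b : R) (i : nat) : a ^ (2 * i + 1) = b ^ (2 * i + 1) -> a = b.
Proof.
  intro H. destruct (Rtotal_order a b) as [Hab|[Hab|Hab]]; auto;
    apply (pow_odd_lt _ _ i) in Hab; lra.
Qed.

Lemma Rpower_odd_root (s : R) (i : nat) : 0 < s -> Rpower s (/ INR (2 * i + 1)) ^ (2 * i + 1) = s.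
Proof.
  intro Hs. rewrite <- Rpower_pow by (unfold Rpower; apply exp_pos).
  rewrite Rpower_mult, Rinv_l by (apply not_0_INR; lia).
  apply Rpower_1; exact Hs.
Qed.

Lemma pow_odd_surj (s : R) (i : nat) : exists r, r ^ (2 * i + 1) = s.
Proof.
  destruct (Rtotal_order s 0) as [Hs|[Hs|Hs]].
  - exists (- Rpower (- s) (/ INR (2 * i + 1))).
    rewrite pow_odd_opp, Rpower_odd_root by lra. ring.
  - exists 0. subst. apply pow_i; lia.
  - exists (Rpower s (/ INR (2 * i + 1))). apply Rpower_odd_root; exact Hs.
Qed.

Lemma Rabs_gt_1_of_pow (c : R) (n : nat) : 1 < Rabs (c ^ n) -> 1 < Rabs c.
Proof.
  intro H. destruct (Rle_lt_dec (Rabs c) 1) as [Hc|Hc]; auto.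
  assert (Rabs c ^ n <= 1 ^ n) by (apply pow_incr; split; [apply Rabs_pos | exact Hc]).
  rewrite pow1, RPow_abs in H0. lra.
Qed.

Lemma pow_inj_exponent (c : R) (m n : nat) : 1 < Rabs c -> c ^ m = c ^ n -> m = n.
Proof.
  intros Hc Hmn. apply (f_equal Rabs) in Hmn. rewrite <- !RPow_abs in Hmn.
  destruct (Nat.lt_total m n) as [H|[H|H]]; auto;
    apply (Rlt_pow _ _ _ Hc) in H; lra.
Qed.

Notation coord v i := (proj1_sig v i).

Definition supported_below (N : nat) (v : Vcar) : Prop :=
  forall i, (N <= i)%nat -> coord v i = 0.

Definition supported_at (k : nat) (v : Vcar) : Prop :=
  forall i, i <> k -> coord v i = 0.

Lemma fin_supp_unit (k : nat) (r : R) : fin_supp (fun i => if Nat.eqb i k then r else 0).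
Proof. exists (S k); intros i Hi. destruct (Nat.eqb_spec i k); [lia | reflexivity]. Qed.

Lemma fin_supp_trunc (s : nat -> R) (N : nat) : fin_supp (fun i => if Nat.ltb i N then s i else 0).
Proof. exists N; intros i Hi. destruct (Nat.ltb_spec i N); [lia | reflexivity]. Qed.

Definition Vunit (k : nat) (r : R) : Vcar := exist _ _ (fin_supp_unit k r).

Definition Vtrunc (v : Vcar) (N : nat) : Vcar := exist _ _ (fin_supp_trunc (proj1_sig v) N).

Tactic Notation "vsimpl" := cbn [proj1_sig Vadd Vact Vzero Vunit Vtrunc Vstr car ladd lact lzero].
Tactic Notation "vsimpl" "in" hyp(H) :=
  cbn [proj1_sig Vadd Vact Vzero Vunit Vtrunc Vstr car ladd lact lzero] in H.

Lemma Vext (x y : Vcar) : (forall i, coord x i = coord y i) -> x = y.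
Proof.
  destruct x as [x px], y as [y py]; simpl; intro H.
  assert (x = y) by (apply functional_extensionality; exact H).
  subst; f_equal; apply proof_irrelevance.
Qed.

Lemma Vact_0 (x : Vcar) : Vact 0 x = Vzero.
Proof. apply Vext; intro i; vsimpl. rewrite pow_i by lia; ring. Qed.

Lemma Vact_1 (x : Vcar) : Vact 1 x = x.
Proof. apply Vext; intro i; vsimpl. rewrite pow1; ring. Qed.

Lemma Vact_mul (a b : R) (x : Vcar) : Vact (a * b) x = Vact a (Vact b x).
Proof. apply Vext; intro i; vsimpl. rewrite Rpow_mult_distr; ring. Qed.

Lemma Vadd_Vact_opp1 (x : Vcar) : Vadd x (Vact (-1) x) = Vzero /\ Vadd (Vact (-1) x) x = Vzero.
Proof.
  assert (Hpow : forall i, (-1) ^ (2 * i + 1) = -1).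
  { intro i. replace (-1) with (Ropp 1) by ring. rewrite pow_odd_opp, pow1; ring. }
  split; apply Vext; intro i; vsimpl; rewrite Hpow; ring.
Qed.

Lemma Vact_invK (l : R) (x : Vcar) : l <> 0 -> Vact (/ l) (Vact l x) = x.
Proof. intro Hl. rewrite <- Vact_mul, Rinv_l by exact Hl. apply Vact_1. Qed.

Lemma Vact_Kinv (l : R) (x : Vcar) : l <> 0 -> Vact l (Vact (/ l) x) = x.
Proof. intro Hl. rewrite <- Vact_mul, Rinv_r by exact Hl. apply Vact_1. Qed.

Lemma Vact_free (a b : R) (x : Vcar) : Vact a x = Vact b x -> a = b \/ x = Vzero.
Proof.
  intro H. destruct (classic (exists i, coord x i <> 0)) as [[i Hi]|Hzero].
  - left. apply (f_equal (fun w => coord w i)) in H; vsimpl in H.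
    apply Rmult_eq_reg_r in H; [|exact Hi]. exact (pow_odd_inj _ _ _ H).
  - right; apply Vext; intro i; vsimpl.
    apply NNPP; intro Hi. apply Hzero; exists i; exact Hi.
Qed.

Lemma V_F_group : F_group Vstr.
Proof.
  assert (Hnz : forall l, (exists x : Vstr, lact l x <> lzero) -> l <> 0).
  { intros l [x Hx] ->. exact (Hx (Vact_0 x)). }
  refine (conj (conj _ (conj _ _))
    (conj _ (conj _ (conj _ (conj _ (conj _ (conj _ (conj _ _))))))));
    cbn [Vstr car ladd lact lzero].
  - intros x y z; apply Vext; intro i; vsimpl; ring.
  - intro x; split; apply Vext; intro i; vsimpl; ring.
  - intro x; exists (Vact (-1) x); apply Vadd_Vact_opp1.
  - intros l x y; apply Vext; intro i; vsimpl; ring.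
  - exists 0; exact Vact_0.
  - exists 1; exact Vact_1.
  - exists (-1); exact Vadd_Vact_opp1.
  - intros l Hl; split.
    + intros x y Hxy.
      rewrite <- (Vact_invK l x), <- (Vact_invK l y), Hxy by exact (Hnz l Hl). reflexivity.
    + intro y; exists (Vact (/ l) y). exact (Vact_Kinv l y (Hnz l Hl)).
  - intros l1 l2 _ _; exists (l1 * l2); intro x; apply Vact_mul.
  - intros l Hl; exists (/ l); intro x. exact (Vact_invK l x (Hnz l Hl)).
  - intros a b x H. destruct (Vact_free a b x H) as [->| ->]; [left | right]; auto.
Qed.

Lemma Qker_V_supported_at (k : nat) (v : Vcar) : supported_at k v -> Qker Vstr v.
Proof.
  intros Hv a b. destruct (pow_odd_surj (a ^ (2 * k + 1) + b ^ (2 * k + 1)) k) as [c Hc].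
  exists c. apply Vext; intro i; vsimpl.
  destruct (Nat.eq_dec i k) as [->|Hik].
  - rewrite Hc; ring.
  - rewrite Hv by exact Hik; ring.
Qed.

Lemma gen_Qker_V_supported_below (N : nat) (v : Vcar) :
  supported_below N v -> gen Vstr (Qker Vstr) v.
Proof.
  revert v; induction N as [|N IH]; intros v Hv.
  - replace v with Vzero; [apply gen_zero|].
    apply Vext; intro i; vsimpl. symmetry; apply Hv; lia.
  - replace v with (Vadd (Vtrunc v N) (Vunit N (coord v N))).
    + apply (gen_add Vstr).
      * apply IH. intros i Hi; vsimpl. destruct (Nat.ltb_spec i N); [lia | reflexivity].
      * apply gen_in, (Qker_V_supported_at N).
        intros i Hi; vsimpl. destruct (Nat.eqb_spec i N); [contradiction | reflexivity].
    + apply Vext; intro i; vsimpl.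
      destruct (Nat.ltb_spec i N), (Nat.eqb_spec i N); subst; try lia; try ring.
      rewrite Hv by lia; ring.
Qed.

Lemma V_near_vs : near_vs Vstr.
Proof.
  split; [exact V_F_group|].
  intros [v [N HN]]. apply (gen_Qker_V_supported_below N). exact HN.
Qed.

Lemma V_double_supported_at (c : R) :
  exists k, forall v : Vcar, Vadd v v = Vact c v -> supported_at k v.
Proof.
  assert (Hcoord : forall v i, Vadd v v = Vact c v -> c ^ (2 * i + 1) <> 2 -> coord v i = 0).
  { intros v i Hv Hci. apply (f_equal (fun w => coord w i)) in Hv; vsimpl in Hv.
    assert (Hz : (2 - c ^ (2 * i + 1)) * coord v i = 0) by lra.
    apply Rmult_integral in Hz as [Hz|Hz]; [lra | exact Hz]. }
  destruct (classic (exists k, c ^ (2 * k + 1) = 2)) as [[k Hk]|Hno].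
  - exists k. intros v Hv i Hik. apply (Hcoord v i Hv). intro Hi.
    assert (Hc : 1 < Rabs c).
    { apply (Rabs_gt_1_of_pow c (2 * k + 1)). rewrite Hk, Rabs_pos_eq; lra. }
    assert (2 * i + 1 = 2 * k + 1)%nat by (apply (pow_inj_exponent c); congruence).
    lia.
  - exists 0%nat. intros v Hv i _. apply (Hcoord v i Hv). intro Hi. apply Hno; exists i; exact Hi.
Qed.

Section Ultrafilter.
Variable U : (nat -> Prop) -> Prop.
Hypothesis HU : ultrafilter U.

Lemma uf_superset (A B : nat -> Prop) : U A -> (forall n, A n -> B n) -> U B.
Proof. apply HU. Qed.

Lemma uf_inter (A B : nat -> Prop) : U A -> U B -> U (fun n => A n /\ B n).
Proof. apply HU. Qed.

Lemma uf_compl (A : nat -> Prop) : U A \/ U (fun n => ~ A n).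
Proof. apply HU. Qed.

Lemma uf_full (A : nat -> Prop) : (forall n, A n) -> U A.
Proof. intro H; apply (uf_superset (fun _ => True)); auto. apply HU. Qed.

Lemma uf_nonempty (A : nat -> Prop) : U A -> exists n, A n.
Proof.
  intro HA. apply NNPP; intro Hno. apply (proj1 (proj2 HU)).
  apply (uf_superset _ _ HA). intros n Hn; apply Hno; exists n; exact Hn.
Qed.

Lemma uf_combine (A B C : nat -> Prop) : U A -> U B -> (forall n, A n -> B n -> C n) -> U C.
Proof. intros HA HB H. apply (uf_superset _ _ (uf_inter _ _ HA HB)). intros n []; auto. Qed.

Lemma uf_nonprincipal_not_bounded (N : nat) : nonprincipal U -> ~ U (fun n => (n < N)%nat).
Proof.
  intros HN; induction N as [|N IH]; intro H.
  - destruct (uf_nonempty _ H) as [n Hn]; lia.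
  - destruct (uf_compl (fun n => n = N)) as [HeqN|HneN]; [exact (HN N HeqN)|].
    apply IH, (uf_combine _ _ _ H HneN). intros; lia.
Qed.

Section Ultrapower.
Variable M : LStruct.
Notation W := (ultrapower M U).
Notation urep := (urep M U).
Notation uclass := (uclass M U).

Lemma uclass_eq_iff (f g : nat -> M) : uclass f = uclass g <-> U (fun n => f n = g n).
Proof.
  split; intro H.
  - apply (f_equal (ucls M U)) in H; cbn in H.
    change (ueq M U f g). rewrite H. apply uf_full; reflexivity.
  - assert (Hcls : ueq M U f = ueq M U g).
    { apply functional_extensionality; intro h; apply propositional_extensionality.
      unfold ueq; split; intro H'; apply (uf_combine _ _ _ H H'); intros n; congruence. }
    unfold uclass; generalize (ex_intro (fun f0 => ueq M U f = ueq M U f0) f eq_refl).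
    rewrite Hcls; intro p; f_equal; apply proof_irrelevance.
Qed.

Lemma uclass_urep (w : UPcar M U) : w = uclass (urep w).
Proof.
  destruct w as [cls Hcls]. unfold Defs.urep.
  destruct (constructive_indefinite_description _ _) as [f Hf]; cbn in *.
  subst cls. unfold Defs.uclass. f_equal; apply proof_irrelevance.
Qed.

Lemma urep_uclass (f : nat -> M) : U (fun n => urep (uclass f) n = f n).
Proof. apply uclass_eq_iff. symmetry; apply uclass_urep. Qed.

Lemma ultrapower_eq_iff (w1 w2 : W) : w1 = w2 <-> U (fun n => urep w1 n = urep w2 n).
Proof.
  rewrite <- uclass_eq_iff. split; [intros ->; reflexivity|].
  intro H; rewrite (uclass_urep w1), (uclass_urep w2); exact H.
Qed.

Definition env_at (e : nat -> W) (n : nat) : nat -> M := fun k => urep (e k) n.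

Lemma los_term (t : term) (e : nat -> W) :
  U (fun n => urep (teval W e t) n = teval M (env_at e n) t).
Proof.
  induction t as [k| |t1 IH1 t2 IH2|a t IH]; cbn; unfold UPzero, UPadd, UPact.
  - apply uf_full; reflexivity.
  - apply urep_uclass.
  - eapply (uf_combine _ _ _ (uf_inter _ _ IH1 IH2)); [apply urep_uclass|].
    intros n [E1 E2] E; cbn in E. rewrite E, E1, E2; reflexivity.
  - eapply (uf_combine _ _ _ IH); [apply urep_uclass|].
    intros n E1 E; cbn in E. rewrite E, E1; reflexivity.
Qed.

Lemma env_at_update (e : nat -> W) (m : nat) (x : W) (n : nat) :
  env_at (fun k => if Nat.eqb k m then x else e k) n =
  (fun k => if Nat.eqb k m then urep x n else env_at e n k).
Proof. apply functional_extensionality; intro k; unfold env_at; destruct (Nat.eqb k m); reflexivity. Qed.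

Theorem los (phi : formula) (e : nat -> W) :
  holds W e phi <-> U (fun n => holds M (env_at e n) phi).
Proof.
  revert e; induction phi as [t1 t2|phi IH|phi1 IH1 phi2 IH2|m phi IH]; intro e; cbn [holds].
  - rewrite ultrapower_eq_iff.
    pose proof (uf_inter _ _ (los_term t1 e) (los_term t2 e)) as Ht.
    split; intro H; apply (uf_combine _ _ _ Ht H); intros n [E1 E2]; congruence.
  - rewrite IH. split; intro H.
    + destruct (uf_compl (fun n => holds M (env_at e n) phi)); tauto.
    + intro H'. destruct (uf_nonempty _ (uf_inter _ _ H H')) as [n [Hn Hn']]. auto.
  - rewrite IH1, IH2. split.
    + intros [H1 H2]; apply uf_inter; assumption.
    + intro H; split; apply (uf_superset _ _ H); tauto.
  - split.
    + intro H.
      destruct (uf_compl (fun n => forall x : M,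
         holds M (fun k => if Nat.eqb k m then x else env_at e n k) phi)) as [Hall|Hnall];
        [exact Hall|exfalso].
      (* a componentwise counterexample, chosen by epsilon, is a counterexample in W *)
      pose (g := fun n => epsilon (inhabits (lzero : M))
                 (fun v => ~ holds M (fun k => if Nat.eqb k m then v else env_at e n k) phi)).
      pose proof (proj1 (IH _) (H (uclass g))) as Hg.
      destruct (uf_nonempty _ (uf_inter _ _ (uf_inter _ _ Hnall Hg) (urep_uclass g)))
        as [n [[Hn Hgn] Eg]].
      rewrite env_at_update, Eg in Hgn.
      apply not_all_ex_not in Hn.
      exact (epsilon_spec (inhabits (lzero : M)) _ Hn Hgn).
    + intros H x. apply IH. rewrite (functional_extensionality _ _ (env_at_update e m x)).
      apply (uf_superset _ _ H). intros n Hn; apply Hn.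
Qed.

Lemma ultrapower_models (phi : formula) : models M phi -> models W phi.
Proof. intros H e. apply los, uf_full; intro n; apply H. Qed.

End Ultrapower.
End Ultrafilter.

Lemma elementary_ultrapower (K : LStruct -> Prop) (M : LStruct) (U : (nat -> Prop) -> Prop) :
  elementary K -> ultrafilter U -> K M -> K (ultrapower M U).
Proof.
  intros [T [_ HT]] HU HM. apply HT. intros phi Tphi.
  exact (ultrapower_models U HU M phi (proj1 (HT M) HM phi Tphi)).
Qed.

Lemma nonprincipal_ultrafilter_exists : exists U, ultrafilter U /\ nonprincipal U.
Proof.
  destruct (filter.ultraFilterLemma filter.eventually_filter) as [G [HG Hcof]].
  pose proof (filter.ultra_proper (UltraFilter := HG)) as HGp.
  exists G; split; [repeat split|].
  - apply filter.filterT.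
  - apply (filter.filter_not_empty G).
  - intros A B GA AB. apply (filter.filterS (P := A)); assumption.
  - intros A B GA GB. exact (filter.filterI GA GB).
  - intro A. exact (filter.in_ultra_setVsetC A HG).
  - intros m Gm.
    assert (Gc : G (fun n => n <> m)).
    { apply Hcof. exists (S m); [exact I|]. intros n Hn Hnm.
      apply (reflect_iff _ _ (@ssrnat.leP (S m) n)) in Hn. lia. }
    apply (filter.filter_not_empty G).
    eapply filter.filterS; [|exact (filter.filterI Gm Gc)].
    intros n [E N]; exact (N E).
Qed.

Section UltrapowerV.
Variable U : (nat -> Prop) -> Prop.
Hypothesis HU : ultrafilter U.
Notation W := (ultrapower Vstr U).
Notation urep := (urep Vstr U).
Notation uclass := (uclass Vstr U).

Lemma Qker_W_supported_at (w : W) : Qker W w -> exists k, U (fun n => supported_at k (urep w n)).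
Proof.
  intro Hw. destruct (Hw 1 1) as [c Hc]. destruct (V_double_supported_at c) as [k Hk].
  exists k. cbn in Hc; unfold UPadd, UPact in Hc. apply (uclass_eq_iff U HU) in Hc.
  apply (uf_combine _ HU _ _ _ Hc (urep_uclass U HU Vstr (fun n => Vact 1 (urep w n)))).
  intros n Hn E; vsimpl in Hn. rewrite E, Vact_1 in Hn. exact (Hk _ Hn).
Qed.

Lemma Qker_W_prodQ (w : W) : Qker W w -> prodQ Vstr U w.
Proof.
  intro Hw. destruct (Qker_W_supported_at w Hw) as [k Hk].
  exists (urep w). split; [apply uclass_urep|].
  apply (uf_superset _ HU _ _ Hk). intro n. apply Qker_V_supported_at.
Qed.

Lemma gen_Qker_W_supported_below (w : W) :
  gen W (Qker W) w -> exists N, U (fun n => supported_below N (urep w n)).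
Proof.
  induction 1 as [u Hu| |x y _ [N1 H1] _ [N2 H2]|x y _ [N HN] Hxy].
  - destruct (Qker_W_supported_at u Hu) as [k Hk]. exists (S k).
    apply (uf_superset _ HU _ _ Hk). intros n Hn i Hi; apply Hn; lia.
  - exists 0%nat. apply (uf_superset _ HU _ _ (urep_uclass U HU Vstr (fun _ => @lzero Vstr))).
    intros n E i _. cbn [lzero ultrapower]; unfold UPzero. rewrite E; reflexivity.
  - exists (N1 + N2)%nat.
    apply (uf_combine _ HU _ _ _ (uf_inter _ HU _ _ H1 H2)
             (urep_uclass U HU Vstr (fun n => @ladd Vstr (urep x n) (urep y n)))).
    intros n [Hx Hy] E i Hi. cbn [ladd ultrapower]; unfold UPadd. rewrite E; vsimpl. rewrite Hx, Hy by lia; ring.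
  - exists N. cbn in Hxy; unfold UPadd, UPzero in Hxy. apply (uclass_eq_iff U HU) in Hxy.
    apply (uf_combine _ HU _ _ _ HN Hxy). intros n Hx E i Hi.
    apply (f_equal (fun v => coord v i)) in E; vsimpl in E. rewrite Hx in E by exact Hi. lra.
Qed.

Definition diag_unit : W := uclass (fun n => Vunit n 1).

Lemma diag_unit_prodQ : prodQ Vstr U diag_unit.
Proof.
  exists (fun n => Vunit n 1). split; [reflexivity|].
  apply (uf_full _ HU). intro n. apply (Qker_V_supported_at n).
  intros i Hi; vsimpl. destruct (Nat.eqb_spec i n); [contradiction | reflexivity].
Qed.

Hypothesis HN : nonprincipal U.

Lemma diag_unit_not_gen : ~ gen W (Qker W) diag_unit.
Proof.
  intro Hgen. destruct (gen_Qker_W_supported_below _ Hgen) as [N HNsupp].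
  apply (uf_nonprincipal_not_bounded _ HU N HN).
  apply (uf_combine _ HU _ _ _ HNsupp (urep_uclass U HU Vstr (fun n => Vunit n 1))).
  intros n Hn E. destruct (Nat.lt_ge_cases n N) as [Hlt|Hge]; [exact Hlt|].
  specialize (Hn n Hge). unfold diag_unit in Hn. rewrite E in Hn; vsimpl in Hn. rewrite Nat.eqb_refl in Hn. lra.
Qed.

Lemma diag_unit_not_Qker : ~ Qker W diag_unit.
Proof. intro Hq. exact (diag_unit_not_gen (gen_in _ _ _ Hq)). Qed.

End UltrapowerV.

Theorem mainTheorem12 :
  near_vs Vstr /\
  (forall U : (nat -> Prop) -> Prop, ultrafilter U -> nonprincipal U ->
     ~ (forall w : ultrapower Vstr U, gen (ultrapower Vstr U) (Qker (ultrapower Vstr U)) w) /\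
     (forall w : ultrapower Vstr U, Qker (ultrapower Vstr U) w -> prodQ Vstr U w) /\
     (exists w : ultrapower Vstr U, prodQ Vstr U w /\ ~ Qker (ultrapower Vstr U) w)) /\
  ~ elementary near_vs.
Proof.
  split; [exact V_near_vs|]. split.
  - intros U HU HN. split; [|split].
    + intro Hgen. exact (diag_unit_not_gen U HU HN (Hgen (diag_unit U))).
    + exact (Qker_W_prodQ U HU).
    + exists (diag_unit U).
      split; [exact (diag_unit_prodQ U HU) | exact (diag_unit_not_Qker U HU HN)].
  - intro Hel. destruct nonprincipal_ultrafilter_exists as [U [HU HN]].
    apply (diag_unit_not_gen U HU HN).
    apply (elementary_ultrapower near_vs Vstr U Hel HU V_near_vs).
Qed.
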